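(* In the arrow category $\mathrm{Arr}(\mathrm{Ab})$ of abelian groups (i.e. $\mathscr{A}^\mathbb{T}$ with $\mathscr{A}=\mathrm{Ab}$, $\mathbb{T}$ the walking arrow $1\to0$, $\mathbb{S}=\{0\}$, so that $\mathscr{F}$ consists of arrows $0\to A$ and the reflection sends $a:A_1\to A_0$ to $\mathrm{Cok}(a)$), the morphism of arrows $(f_0,f_1)$ from $1_\mathbb{Z}:\mathbb{Z}\to\mathbb{Z}$ to $\mathbb{Z}\to0$ with $f_1=1_\mathbb{Z}$ and $f_0:\mathbb{Z}\to0$ is an extension which is central but not trivial with respect to $\mathscr{F}$. Consequently the torsion class $\mathscr{T}$ of the torsion theory $(\mathscr{T},\mathscr{F})$ in $\mathrm{Arr}(\mathrm{Ab})$ is not closed under regular subobjects.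
   Context: An extension in $\mathrm{Arr}(\mathscr{A})$ from $a:A_1\to A_0$ to $b:B_1\to B_0$ is a commutative square $(f_0,f_1)$ with $f_0,f_1$ regular epimorphisms. It is trivial if the naturality square of the unit of the reflection into $\mathscr{F}$ is a pullback; central if its pullback along some regular epimorphism $p$ is trivial. $\mathscr{T}$ consists of the arrows $a:A_1\to A_0$ that are epimorphisms (the torsion class of the torsion theory whose torsion-free class is $\mathscr{F}$). *)

From HB Require Import structures.
From mathcomp Require Import all_boot all_algebra ring_quotient.
From mathcomp Require Import boolp.
Set Implicit Arguments. Unset Strict Implicit. Unset Printing Implicit Defensive.
Import GRing.Theory.
Local Open Scope ring_scope.
Local Open Scope quotient_scope.

(* Basic set-level notions in Ab (limits/epis are computed on underlying sets). *)
Definition surj (X Y : Type) (f : X -> Y) : Prop := forall y, exists x, f x = y.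
Definition inj (X Y : Type) (f : X -> Y) : Prop := forall x x', f x = f x' -> x = x'.

Definition is_pullback (P X Y Z : Type) (p1 : P -> X) (p2 : P -> Y)
  (g : X -> Z) (h : Y -> Z) : Prop :=
  (forall p, g (p1 p) = h (p2 p)) /\
  (forall x y, g x = h y -> exists! p, p1 p = x /\ p2 p = y).

Record arr := Arr { arr1 : zmodType; arr0 : zmodType; amap : {additive arr1 -> arr0} }.

Record arr_hom (A B : arr) := ArrHom {
  hom1 : {additive arr1 A -> arr1 B};
  hom0 : {additive arr0 A -> arr0 B};
  hom_comm : forall x, amap B (hom1 x) = hom0 (amap A x) }.

Definition regular_epi A B (f : arr_hom A B) : Prop :=
  surj (hom1 f) /\ surj (hom0 f).
Definition regular_mono A B (f : arr_hom A B) : Prop :=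
  inj (hom1 f) /\ inj (hom0 f).

Definition arr_pullback P X Y Z (p1 : arr_hom P X) (p2 : arr_hom P Y)
  (g : arr_hom X Z) (h : arr_hom Y Z) : Prop :=
  is_pullback (hom1 p1) (hom1 p2) (hom1 g) (hom1 h) /\
  is_pullback (hom0 p1) (hom0 p2) (hom0 g) (hom0 h).

Section Image.
Variables (X Y : zmodType) (f : {additive X -> Y}).
Definition imgp : {pred Y} := fun y => `[< exists x, f x = y >].
Lemma imgp_zmod_closed : zmod_closed imgp.
Proof.
split.
  by apply/asboolP; exists 0; rewrite raddf0.
move=> u v /asboolP [x <-] /asboolP [y <-]; apply/asboolP; exists (x - y).
by rewrite raddfB.
Qed.
HB.instance Definition _ := GRing.isZmodClosed.Build Y imgp imgp_zmod_closed.
End Image.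

Definition coker (A : arr) : zmodType := @Quotient.quot _ (imgp (amap A)).
Definition coker_pi (A : arr) : arr0 A -> coker A := \pi_(coker A).
Arguments coker_pi : clear implicits.

Definition zero_grp : zmodType := 'I_1.

Section ZeroMap.
Variables (X Y : zmodType).
Definition zero_map : X -> Y := fun _ => 0.
Lemma zero_map_additive : zmod_morphism zero_map.
Proof. by move=> x y; rewrite /zero_map subr0. Qed.
HB.instance Definition _ := GRing.isZmodMorphism.Build X Y zero_map
  zero_map_additive.
End ZeroMap.
Arguments zero_map : clear implicits.

Definition reflect_obj (A : arr) : arr :=
  @Arr zero_grp (coker A) (zero_map zero_grp (coker A)).

Lemma coker_pi_additive (A : arr) : zmod_morphism (coker_pi A).
Proof. by move=> x y; rewrite /coker_pi raddfB. Qed.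
Arguments coker_pi_additive : clear implicits.
HB.instance Definition _ (A : arr) :=
  GRing.isZmodMorphism.Build (arr0 A) (coker A) (coker_pi A) (coker_pi_additive A).

Lemma unit_comm (A : arr) x :
  zero_map zero_grp (coker A) (zero_map (arr1 A) zero_grp x) =
  coker_pi A (amap A x).
Proof.
rewrite /zero_map; apply/esym/eqP.
rewrite -(raddf0 (coker_pi A)) /coker_pi -(Quotient.idealrBE (imgp (amap A))) subr0.
by apply/asboolP; exists x.
Qed.

Definition eta (A : arr) : arr_hom A (reflect_obj A) :=
  @ArrHom A (reflect_obj A) (zero_map (arr1 A) zero_grp) (coker_pi A) (@unit_comm A).

Section CokerMap.
Variables (A B : arr) (f : arr_hom A B).
Definition coker_map : coker A -> coker B := fun c => coker_pi B (hom0 f (repr c)).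

Lemma coker_mapE x : coker_map (coker_pi A x) = coker_pi B (hom0 f x).
Proof.
rewrite /coker_map /coker_pi; apply/eqP.
rewrite -(Quotient.idealrBE (imgp (amap B))) -raddfB.
have : repr (\pi_(coker A) x) - x \in imgp (amap A).
  by rewrite (Quotient.idealrBE (imgp (amap A))) reprK.
move/asboolP=> [z <-]; apply/asboolP; exists (hom1 f z); exact: hom_comm.
Qed.

Lemma coker_map_additive : zmod_morphism coker_map.
Proof.
move=> c d.
rewrite -[c]reprK -[d]reprK.
have -> : \pi_(coker A) (repr c) - \pi_(coker A) (repr d) =
          coker_pi A (repr c - repr d) by rewrite /coker_pi raddfB.
by rewrite -!/(coker_pi _ _) !coker_mapE raddfB /coker_pi raddfB.
Qed.
HB.instance Definition _ := GRing.isZmodMorphism.Build (coker A) (coker B)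
  coker_map coker_map_additive.

Lemma reflect_comm x :
  zero_map zero_grp (coker B) (idfun x) = coker_map (zero_map zero_grp (coker A) x).
Proof. by rewrite /zero_map raddf0. Qed.

Definition reflect_hom : arr_hom (reflect_obj A) (reflect_obj B) :=
  @ArrHom (reflect_obj A) (reflect_obj B) idfun coker_map reflect_comm.
End CokerMap.

Definition extension A B (f : arr_hom A B) : Prop := regular_epi f.

Definition trivial_extension A B (f : arr_hom A B) : Prop :=
  extension f /\ arr_pullback f (eta A) (eta B) (reflect_hom f).

Definition central_extension A B (f : arr_hom A B) : Prop :=
  extension f /\
  exists (E : arr) (p : arr_hom E B) (P : arr) (q : arr_hom P A) (f' : arr_hom P E),
    regular_epi p /\ arr_pullback q f' f p /\ trivial_extension f'.

Definition torsionT (A : arr) : Prop := surj (amap A).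

Definition closed_under_regular_subobjects (C : arr -> Prop) : Prop :=
  forall (S A : arr) (m : arr_hom S A), regular_mono m -> C A -> C S.

Definition idZ : arr := @Arr int int idfun.
Definition Zto0 : arr := @Arr int zero_grp (zero_map int zero_grp).

Lemma ex_comm x : zero_map int zero_grp (idfun x) = zero_map int zero_grp (idfun x).
Proof. by []. Qed.

Definition ex_mor : arr_hom idZ Zto0 :=
  @ArrHom idZ Zto0 idfun (zero_map int zero_grp) ex_comm.

(* The reflection sends an arrow a to Cok(a), which vanishes exactly on the
   torsion class T.  In degree 0 the naturality square of the unit at the
   given morphism f is  Z -> 0  over  Cok(1_Z) = 0 -> 0,  which is not a
   pullback; so f is not trivial.  Pulling f back along itself gives the
   diagonal  Z -> Z x Z,  whose cokernel is Z, and the projection onto the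
   second factor is a trivial extension because (a, b) |-> (b, [(a, b)]) is a
   bijection Z x Z -> Z x Cok(diagonal).  Finally (0 -> Z) is a regular
   subobject of 1_Z: the latter is an epimorphism, the former is not. *)
From HB Require Import structures.
From mathcomp Require Import all_boot all_algebra ring_quotient boolp.
Set Implicit Arguments. Unset Strict Implicit. Unset Printing Implicit Defensive.
Import GRing.Theory.
Local Open Scope ring_scope.
Local Open Scope quotient_scope.

Lemma zero_grp_trivial (a b : zero_grp) : a = b.
Proof. by apply: val_inj; case: a => [[|n] Ha]; case: b => [[|m] Hb]. Qed.

Lemma coker_pi_eq (A : arr) (x y : arr0 A) :
  coker_pi A x = coker_pi A y <-> exists z, amap A z = x - y.
Proof.
rewrite /coker_pi; split.
  by move/eqP; rewrite -(Quotient.idealrBE (imgp (amap A))) => /asboolP.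
move=> ex_z; apply/eqP.
by rewrite -(Quotient.idealrBE (imgp (amap A))); apply/asboolP.
Qed.

Arguments coker_pi_eq {A x y}.

Lemma coker_pi_surj (A : arr) : surj (coker_pi A).
Proof. by move=> c; exists (repr c); rewrite /coker_pi reprK. Qed.

Lemma coker_trivial (A : arr) : torsionT A -> forall a b : coker A, a = b.
Proof.
move=> surj_a a b.
have [x <-] := coker_pi_surj a; have [y <-] := coker_pi_surj b.
by apply/coker_pi_eq; apply: surj_a.
Qed.

Section Pullbacks.
Variables (P X Y Z : Type) (p1 : P -> X) (p2 : P -> Y) (g : X -> Z) (h : Y -> Z).

Lemma is_pullback_jointly_inj : is_pullback p1 p2 g h ->
  forall p p', p1 p = p1 p' -> p2 p = p2 p' -> p = p'.
Proof.
move=> [comm univ] p p' e1 e2.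
have [q [_ q_uniq]] := univ (p1 p') (p2 p') (comm p').
by rewrite -(q_uniq p) // (q_uniq p').
Qed.

Lemma is_pullback_over_trivial : (forall z z' : Z, z = z') ->
  (forall x y, exists! p, p1 p = x /\ p2 p = y) -> is_pullback p1 p2 g h.
Proof.
by move=> Z_trivial p_bij; split=> [p | x y _]; [apply: Z_trivial | apply: p_bij].
Qed.

End Pullbacks.

Lemma is_pullback_id_inj (X Z : Type) (g : X -> Z) :
  inj g -> is_pullback id id g g.
Proof.
move=> g_inj; split=> // x y /g_inj <-.
by exists x; split=> // p [].
Qed.

Lemma torsionT_idZ : torsionT idZ.
Proof. by move=> y; exists y. Qed.

Lemma extension_ex_mor : extension ex_mor.
Proof. by split=> y; [exists y | exists 0; apply: zero_grp_trivial]. Qed.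

Lemma not_trivial_extension_ex_mor : ~ trivial_extension ex_mor.
Proof.
move=> [_ [_ square0]].
suff : (0 : int) = 1 by [].
apply: (is_pullback_jointly_inj square0).
  exact: zero_grp_trivial.
exact: (coker_trivial torsionT_idZ).
Qed.

Section Diagonal.
Variable G : zmodType.

Definition diag (x : G) : G * G := (x, x).
Lemma diag_is_zmod_morphism : zmod_morphism diag. Proof. by []. Qed.
HB.instance Definition _ := GRing.isZmodMorphism.Build G (G * G)%type diag
  diag_is_zmod_morphism.

Definition diag_arr : arr := @Arr G (G * G)%type diag.

Lemma snd_coker_diag_bij (x : G) (c : coker diag_arr) :
  exists! p : G * G, p.2 = x /\ coker_pi diag_arr p = c.
Proof.
have [[r1 r2] <-] := coker_pi_surj c.
exists (x + r1 - r2, x); split.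
  split=> //; apply/coker_pi_eq; exists (x - r2).
  by congr pair; rewrite /= addrAC addrK.
move=> [a b] [+ /coker_pi_eq [z [za zx]]] => /= bx; subst x.
by congr pair; rewrite addrAC -zx za subrK.
Qed.

End Diagonal.

Definition diag_fst : arr_hom (diag_arr int) idZ :=
  @ArrHom (diag_arr int) idZ idfun fst (fun=> erefl).
Definition diag_snd : arr_hom (diag_arr int) idZ :=
  @ArrHom (diag_arr int) idZ idfun snd (fun=> erefl).

Lemma diag_pullback_ex_mor : arr_pullback diag_fst diag_snd ex_mor ex_mor.
Proof.
split; first exact: is_pullback_id_inj.
apply: is_pullback_over_trivial; first exact: zero_grp_trivial.
by move=> x y; exists (x, y); split=> // -[a b] [/= -> ->].
Qed.

Lemma trivial_extension_diag_snd : trivial_extension diag_snd.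
Proof.
split; first by split=> y; [exists y | exists (0, y)].
split; apply: is_pullback_over_trivial.
- exact: zero_grp_trivial.
- move=> x y; exists x; split; first by split; last apply: zero_grp_trivial.
  by move=> p [].
- exact: coker_trivial torsionT_idZ.
- exact: snd_coker_diag_bij.
Qed.

Lemma central_extension_ex_mor : central_extension ex_mor.
Proof.
split; first exact: extension_ex_mor.
exists idZ, ex_mor, (diag_arr int), diag_fst, diag_snd.
split; first exact: extension_ex_mor.
by split; [exact: diag_pullback_ex_mor | exact: trivial_extension_diag_snd].
Qed.

Definition zero_to_Z : arr := @Arr zero_grp int (zero_map zero_grp int).
Definition zero_to_Z_incl : arr_hom zero_to_Z idZ :=
  @ArrHom zero_to_Z idZ (zero_map zero_grp int) idfun (fun=> erefl).

Lemma regular_mono_zero_to_Z_incl : regular_mono zero_to_Z_incl.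
Proof. by split=> x y // _; apply: zero_grp_trivial. Qed.

Lemma not_torsionT_zero_to_Z : ~ torsionT zero_to_Z.
Proof. by move=> /(_ 1) [x /eqP]; rewrite eq_sym oner_eq0. Qed.

Theorem mainTheorem5 :
  (extension ex_mor /\ central_extension ex_mor /\ ~ trivial_extension ex_mor) /\
  ~ closed_under_regular_subobjects torsionT.
Proof.
split.
  split; first exact: extension_ex_mor.
  by split; [exact: central_extension_ex_mor | exact: not_trivial_extension_ex_mor].
move=> T_closed; apply: not_torsionT_zero_to_Z.
exact: (T_closed _ _ _ regular_mono_zero_to_Z_incl torsionT_idZ).
Qed.
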